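(* For integers $m\ge1$ and $k\ge0$, $$\mu(N|_m,k,J)=\mu(P|_m,k,L)\qquad\text{and}\qquad \mu(P|_m,k,J^{*})=\mu(Q|_m,k,J^{*}).$$
   Context: Let $N=\{0,1,2,\ldots\}$, $J=\{(2n+1)2^{2k}-1 : n,k\in N\}$, $J^{*}=\{(2n+1)2^{2k}-1 : n,k\in N,\ k>0\}$, $K=N\setminus J$, $L=N\setminus J^{*}$, $P=\{k\in N: k\equiv0,3\pmod 4\}$, $Q=\{k\in N: k\equiv 1,2\pmod 4\}$. For an infinite set $A\subseteq N$, $A|_m$ denotes the set of the $m$ smallest elements of $A$. An involution on a finite set $A$ is a permutation $\sigma$ of $A$ with $\sigma=\sigma^{-1}$; its cycles are fixed points and transpositions $(c,d)$. A transposition $(c,d)$ is said to be in a set $B$ if $c+d\in B$. For a finite set $A\subseteq N$, an integer $k\ge0$ and a set $B\subseteq N$, $\mu(A,k,B)$ denotes the number of involutions of $A$ having exactly $k$ transpositions, all of which are in $B$. *)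

From mathcomp Require Import all_boot all_order all_fingroup.
From mathcomp Require Import zify.
Set Implicit Arguments. Unset Strict Implicit. Unset Printing Implicit Defensive.

(* J = {(2n+1)2^(2k) - 1 : n,k in N}.  Witnesses satisfy n,k <= x, so the
   bounded quantifiers are exactly the unbounded ones. *)
Definition J : pred nat := fun x =>
  [exists n : 'I_x.+1, exists k : 'I_x.+1, x.+1 == (2 * n + 1) * 2 ^ (2 * k)].
Definition Jstar : pred nat := fun x =>
  [exists n : 'I_x.+1, exists k : 'I_x.+1,
     (0 < k) && (x.+1 == (2 * n + 1) * 2 ^ (2 * k))].
Definition K : pred nat := fun x => ~~ J x.
Definition L : pred nat := fun x => ~~ Jstar x.
Definition Nset : pred nat := predT.
Definition P : pred nat := fun x => (x %% 4 == 0) || (x %% 4 == 3).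
Definition Q : pred nat := fun x => (x %% 4 == 1) || (x %% 4 == 2).

Definition infinite_pred (A : pred nat) := forall n, exists x, (n <= x) && A x.

Section Trunc.
Variables (A : pred nat) (hA : infinite_pred A).
Definition next_in (n : nat) : nat := ex_minn (hA n).
Fixpoint elem_in (i : nat) : nat :=
  match i with 0 => next_in 0 | i'.+1 => next_in (elem_in i').+1 end.
(* A|_m, as the (increasing) list of its elements *)
Definition trunc (m : nat) : seq nat := [seq elem_in i | i <- iota 0 m].
End Trunc.

Lemma infinite_N : infinite_pred Nset.
Proof. by move=> n; exists n; rewrite leqnn. Qed.
Lemma infinite_P : infinite_pred P.
Proof.
move=> n; exists (4 * n); apply/andP; split; first lia.
by rewrite /P modnMr eqxx.
Qed.
Lemma infinite_Q : infinite_pred Q.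
Proof.
move=> n; exists (4 * n + 1); apply/andP; split; first lia.
by rewrite /P /Q -modnDm modnMr.
Qed.

(* Involutions sigma of the finite set A (permutations of the finite type of
   elements of A with sigma = sigma^-1) having exactly k transpositions
   (c,d) (counted once each, as the pairs with c < d = sigma c), all of
   which are in B, i.e. c + sigma c \in B whenever sigma c <> c. *)
Definition mu (A : seq nat) (k : nat) (B : pred nat) : nat :=
  #|[set s : {perm seq_sub A} |
      [&& (s^-1)%g == s,
          #|[set x : seq_sub A | val x < val (s x)]| == k &
          [forall x : seq_sub A, (s x != x) ==> B (val x + val (s x))]]]|.

From mathcomp Require Import all_boot all_order all_fingroup.
From mathcomp Require Import zify.
Set Implicit Arguments. Unset Strict Implicit. Unset Printing Implicit Defensive.

(* Both identities transport involutions along an order-preserving bijection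
   between the ground sets that maps the admissible transpositions of one side
   onto those of the other.  Membership in J only depends on the parity of the
   2-adic valuation of x + 1, and J* is J restricted to odd numbers.  The i-th
   element of P is 2i + (i mod 2), and c + d lies in J exactly when the sum of
   the c-th and d-th elements of P lies outside J*.  Exchanging 2j and 2j + 1
   maps P|_m increasingly onto Q|_m; an even sum is never in J*, and an odd sum
   of two elements of P is left unchanged by the exchange. *)

Lemma odd_mod2 n : odd n = (n %% 2 == 1).
Proof. by rewrite modn2; case: odd. Qed.

Lemma logn2_odd_mul_pow2 a e : logn 2 ((2 * a + 1) * 2 ^ e) = e.
Proof.
rewrite lognM ?expn_gt0 ?addn1 // pfactorK // logn_coprime //.
by rewrite coprime2n /= oddM.
Qed.

Lemma odd_mul_pow2_logn y : 0 < y ->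
  exists2 a, y = (2 * a + 1) * 2 ^ logn 2 y & a < y.
Proof.
move=> y_gt0; have [b b_odd y_eq] := pfactor_coprime (isT : prime 2) y_gt0.
rewrite coprime2n in b_odd.
have b_eq : b = 2 * b./2 + 1 by rewrite -{1}(odd_double_half b) b_odd; lia.
exists b./2; first by rewrite -b_eq.
have : 0 < 2 ^ logn 2 y by rewrite expn_gt0.
rewrite {2}y_eq; nia.
Qed.

Lemma J_logn x : J x = ~~ odd (logn 2 x.+1).
Proof.
apply/existsP/idP => [[n /existsP [k /eqP ->]]|e_even].
  by rewrite logn2_odd_mul_pow2 oddM.
have [a x_eq a_lt] := odd_mul_pow2_logn (ltn0Sn x).
have e_lt : (logn 2 x.+1)./2 < x.+1 by have := ltn_logl 2 (ltn0Sn x); lia.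
exists (Ordinal a_lt); apply/existsP; exists (Ordinal e_lt).
by rewrite /= [2 * _./2]mul2n halfK (negbTE e_even) subn0 -x_eq.
Qed.

Lemma Jstar_J x : Jstar x = J x && odd x.
Proof.
apply/existsP/andP => [[n /existsP [k /andP [k_gt0 x_eq]]]|[/existsP [n]]].
  split; first by apply/existsP; exists n; apply/existsP; exists k.
  move/eqP: x_eq; rewrite -[odd x]negbK -oddS => ->.
  by rewrite oddM oddX muln_eq0 (gtn_eqF k_gt0) andbF.
case/existsP=> k x_eq x_odd; exists n; apply/existsP; exists k.
rewrite x_eq andbT lt0n; apply: contraTneq x_odd => k0.
move/eqP: x_eq; rewrite -[odd x]negbK -oddS k0 muln1 => ->.
by rewrite oddD oddM.
Qed.

Lemma J_even {x} : ~~ odd x -> J x.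
Proof. by move=> x_even; rewrite J_logn logn_coprime // coprime2n. Qed.

Lemma J_double_succ x : J (2 * x + 1) = ~~ J x.
Proof.
rewrite !J_logn (_ : (2 * x + 1).+1 = 2 ^ 1 * x.+1); last by lia.
by rewrite lognM // pfactorK.
Qed.

Lemma Jstar_odd {x} : Jstar x -> odd x.
Proof. by rewrite Jstar_J => /andP []. Qed.

Definition nth_P i := 2 * i + i %% 2.
Definition pair_swap x := x.+1 - 2 * (x %% 2).

Lemma pair_swapK : involutive pair_swap.
Proof. rewrite /pair_swap => x; lia. Qed.

Lemma nth_PK : cancel nth_P (divn^~ 2).
Proof. rewrite /nth_P => i; lia. Qed.

Lemma ltn_nth_P : {mono nth_P : i j / i < j}.
Proof. rewrite /nth_P => i j; apply/idP/idP; lia. Qed.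

Lemma ltn_pair_swap_P : {in P &, {mono pair_swap : x y / x < y}}.
Proof. rewrite /P /pair_swap => x y /orP x_P /orP y_P; apply/idP/idP; lia. Qed.

Lemma L_nth_P c d : L (nth_P c + nth_P d) = J (c + d).
Proof.
rewrite /L Jstar_J /nth_P; move: (odd_mod2 (c + d)).
have [cd_odd|cd_even] := boolP (odd (c + d)) => cd_mod.
  rewrite (_ : _ + _ = 2 * (c + d) + 1); last by lia.
  by rewrite J_double_succ oddD oddM andbT negbK.
have sum_even : ~~ odd (2 * c + c %% 2 + (2 * d + d %% 2)).
  by rewrite odd_mod2; lia.
by rewrite (J_even cd_even) (negbTE sum_even) andbF.
Qed.

Lemma Jstar_pair_swap x y : P x -> P y ->
  Jstar (pair_swap x + pair_swap y) = Jstar (x + y).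
Proof.
rewrite /P /pair_swap => /orP x_P /orP y_P; move: (odd_mod2 (x + y)).
have [xy_odd|xy_even] := boolP (odd (x + y)) => xy_mod.
  by congr Jstar; lia.
have swap_even : ~~ odd (x.+1 - 2 * (x %% 2) + (y.+1 - 2 * (y %% 2))).
  by rewrite odd_mod2; lia.
by apply/idP/idP => /Jstar_odd; rewrite ?(negbTE swap_even) ?(negbTE xy_even).
Qed.

Section ConjugatePerm.
Variables (T1 T2 : finType) (f : T1 -> T2) (g : T2 -> T1).
Hypotheses (fK : cancel f g) (gK : cancel g f).

Lemma conj_perm_inj (s : {perm T1}) : injective (f \o s \o g).
Proof.
exact: inj_comp (can_inj fK) (inj_comp (perm_inj (s := s)) (can_inj gK)).
Qed.

Definition conj_perm (s : {perm T1}) : {perm T2} := perm (@conj_perm_inj s).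

Lemma conj_permE s y : conj_perm s y = f (s (g y)).
Proof. by rewrite permE. Qed.

Lemma conj_permV s : (conj_perm s^-1 = (conj_perm s)^-1)%g.
Proof.
apply/permP => y; apply: (@perm_inj _ (conj_perm s)).
by rewrite permKV !conj_permE fK permKV gK.
Qed.

End ConjugatePerm.

Lemma conj_permK (T1 T2 : finType) (f : T1 -> T2) (g : T2 -> T1)
    (fK : cancel f g) (gK : cancel g f) :
  cancel (conj_perm fK gK) (conj_perm gK fK).
Proof. by move=> s; apply/permP => x; rewrite !conj_permE !fK. Qed.

Definition involution_count (T : finType) (lt B : rel T) (k : nat) :=
  #|[set s : {perm T} | [&& (s^-1)%g == s, #|[set x | lt x (s x)]| == k &
                           [forall x, (s x != x) ==> B x (s x)]]]|.

Lemma muE (A : seq nat) k (B : pred nat) :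
  mu A k B = involution_count (fun x y : seq_sub A => val x < val y)
                              (fun x y => B (val x + val y)) k.
Proof. by []. Qed.

Lemma involution_count_bij (T1 T2 : finType) (f : T1 -> T2) (g : T2 -> T1)
    (lt1 B1 : rel T1) (lt2 B2 : rel T2) k :
  cancel f g -> cancel g f ->
  (forall x y, lt2 (f x) (f y) = lt1 x y) ->
  (forall x y, B2 (f x) (f y) = B1 x y) ->
  involution_count lt1 B1 k = involution_count lt2 B2 k.
Proof.
move=> fK gK f_lt f_B; have conjK := conj_permK fK gK.
rewrite /involution_count -(card_imset _ (can_inj conjK)).
rewrite (can2_imset_pre _ conjK (conj_permK gK fK)); apply: eq_card => t.
rewrite !inE; set s := conj_perm gK fK t.
have sE x : s x = g (t (f x)) by rewrite conj_permE.
have f_bij : bijective f := Bijective fK gK.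
congr [&& _, _ & _].
- by rewrite -conj_permV (inj_eq (can_inj (conj_permK gK fK))).
- rewrite -(on_card_preimset (onW_bij _ f_bij) (R := [set y | lt2 y (t y)])).
  by congr (_ == k); apply: eq_card => x; rewrite !inE sE -f_lt gK.
- apply/forallP/forallP => [s_B y|t_B x]; last first.
    by rewrite sE -f_B gK (can2_eq gK fK); apply: t_B.
  by have := s_B (g y); rewrite sE -f_B !gK (can2_eq gK fK) !gK.
Qed.

Lemma mu_map (A : seq nat) (h h' : nat -> nat) (B B' : pred nat) k :
  cancel h h' -> {in A &, {mono h : x y / x < y}} ->
  {in A &, forall x y, B' (h x + h y) = B (x + y)} ->
  mu (map h A) k B' = mu A k B.
Proof.
move=> hK h_lt h_B.
have h'_mem y : y \in map h A -> h' y \in A by case/mapP=> x x_A ->; rewrite hK.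
pose f (x : seq_sub A) : seq_sub (map h A) := SeqSub (map_f h (ssvalP x)).
pose g (y : seq_sub (map h A)) : seq_sub A := SeqSub (h'_mem _ (ssvalP y)).
have fK : cancel f g by move=> x; apply: val_inj; rewrite /= hK.
have gK : cancel g f.
  move=> [y y_mem]; apply: val_inj => /=.
  by case/mapP: y_mem => x _ ->; rewrite hK.
rewrite !muE; symmetry; apply: (involution_count_bij _ fK gK) => x y /=.
  exact: h_lt (ssvalP x) (ssvalP y).
exact: h_B (ssvalP x) (ssvalP y).
Qed.

Section Enumeration.
Variables (A : pred nat) (hA : infinite_pred A).

Lemma next_in_min n y :
  n <= y -> A y -> (forall z, A z -> n <= z -> y <= z) -> next_in hA n = y.
Proof.
move=> n_le_y Ay y_min; rewrite /next_in.
case: ex_minnP => x /andP [n_le_x Ax] x_min.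
by apply/eqP; rewrite eqn_leq x_min ?n_le_y ?Ay // y_min.
Qed.

Variable e : nat -> nat.
Hypotheses (e_incr : forall i, e i < e i.+1) (e_mem : forall i, A (e i))
           (e_onto : forall z, A z -> exists i, z = e i).

Lemma elem_in_enum i : elem_in hA i = e i.
Proof.
have e_le : {homo e : i j / i <= j}.
  by apply: ltnW_homo; apply: homo_ltn e_incr; exact: ltn_trans.
elim: i => [|i IH] /=.
  by apply: next_in_min => // z /e_onto [j ->] _; apply: e_le.
apply: next_in_min; rewrite ?IH // => z /e_onto [j ->] lt_ij; apply: (e_le).
by case: (ltnP i j) => // /e_le; lia.
Qed.

Lemma trunc_enum m : trunc hA m = map e (iota 0 m).
Proof. exact/eq_map/elem_in_enum. Qed.

End Enumeration.

Lemma P_nth_P i : P (nth_P i).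
Proof. rewrite /P /nth_P; apply/orP; lia. Qed.

Lemma nth_P_onto z : P z -> exists i, z = nth_P i.
Proof. rewrite /P /nth_P => /orP z_P; exists (z %/ 2); lia. Qed.

Lemma Q_pair_swap x : Q (pair_swap x) = P x.
Proof. rewrite /P /Q /pair_swap; apply/orP/orP; lia. Qed.

Lemma trunc_N m : trunc infinite_N m = iota 0 m.
Proof. by rewrite (@trunc_enum _ _ id) ?map_id // => z _; exists z. Qed.

Lemma trunc_P m : trunc infinite_P m = map nth_P (iota 0 m).
Proof.
by apply: trunc_enum; [rewrite /nth_P; lia | exact: P_nth_P | exact: nth_P_onto].
Qed.

Lemma trunc_Q m : trunc infinite_Q m = map pair_swap (trunc infinite_P m).
Proof.
rewrite trunc_P -map_comp; apply: trunc_enum => [i|i|z].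
- by rewrite /= /pair_swap /nth_P; lia.
- by rewrite /= Q_pair_swap P_nth_P.
- by rewrite -[z]pair_swapK Q_pair_swap => /nth_P_onto [i ->]; exists i.
Qed.

Theorem lemma2p2 (m k : nat) : 1 <= m ->
  mu (trunc infinite_N m) k J = mu (trunc infinite_P m) k L /\
  mu (trunc infinite_P m) k Jstar = mu (trunc infinite_Q m) k Jstar.
Proof.
(* The identities hold for m = 0 as well. *)
move=> _; have sub_P : {subset trunc infinite_P m <= P}.
  by rewrite trunc_P => _ /mapP [i _ ->]; apply: P_nth_P.
rewrite trunc_Q trunc_N trunc_P; split; symmetry.
  exact: mu_map nth_PK (in2W ltn_nth_P) (in2W L_nth_P).
rewrite -trunc_P; apply: mu_map pair_swapK _ _.
  by move=> x y /sub_P x_P /sub_P y_P; apply: ltn_pair_swap_P.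
by move=> x y /sub_P x_P /sub_P y_P; apply: Jstar_pair_swap.
Qed.
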